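(* Let $n\ge 1$ and let $\mathcal{I}$ be an interval hypergraph on $[n]$ containing all singletons $\{i\}$, $i\in[n]$. Then the hypergraphic poset $P_{\mathcal{I}}$ is a lattice if and only if $\mathcal{I}$ is closed under intersection, i.e. $I,J\in\mathcal{I}$ and $I\cap J\neq\varnothing$ imply $I\cap J\in\mathcal{I}$.
   Context: A hypergraph $\mathcal{H}$ on $[n]=\{1,\dots,n\}$ is a collection of subsets of $[n]$; by convention it contains all singletons. An interval hypergraph is a hypergraph all of whose members are intervals $[i,j]=\{i,i+1,\dots,j\}$. An orientation of $\mathcal{H}$ is a map $O:\mathcal{H}\to[n]$ with $O(H)\in H$ for all $H$. It is acyclic if there are no $H_1,\dots,H_k\in\mathcal{H}$, $k\ge2$, with $O(H_{i+1})\in H_i\setminus\{O(H_i)\}$ for $i\in[k-1]$ and $O(H_1)\in H_k\setminus\{O(H_k)\}$. Two orientations $O\neq O'$ are related by an increasing flip (from $O$ to $O'$) if there exist $1\le i<j\le n$ such that for all $H\in\mathcal{H}$: if $O(H)\ne O'(H)$ then $O(H)=i$ and $O'(H)=j$; and if $\{i,j\}\subseteq H$ then $O(H)=i\iff O'(H)=j$. The hypergraphic poset $P_{\mathcal{H}}$ is the transitive closure of the increasing flip relation on the set of acyclic orientations of $\mathcal{H}$ (equivalently, the transitive closure of the graph of the polytope $\sum_{H\in\mathcal{H}}\mathrm{conv}\{e_h:h\in H\}$ oriented in the direction $(n-1,n-3,\dots,1-n)$). *)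

(* Vertices [n] = {1..n} are modelled by 'I_n = {0..n-1}. *)
From mathcomp Require Import all_boot.
From Stdlib Require Import Relations.
Set Implicit Arguments. Unset Strict Implicit. Unset Printing Implicit Defensive.

Section Hyper.
Variable n : nat.

Definition hypergraph := {set {set 'I_n}}.

Definition interval (i j : 'I_n) : {set 'I_n} := [set x : 'I_n | (i <= x <= j)%N].

Definition contains_singletons (HH : hypergraph) : Prop :=
  forall i : 'I_n, [set i] \in HH.

Definition interval_hypergraph (HH : hypergraph) : Prop :=
  forall H, H \in HH -> exists i j : 'I_n, (i <= j)%N /\ H = interval i j.

Definition closed_under_intersection (HH : hypergraph) : Prop :=
  forall I J, I \in HH -> J \in HH -> I :&: J != set0 -> I :&: J \in HH.

(* Orientations: maps O on members H of HH with O(H) in H; encoded as a finite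
   function on all subsets, equal to None outside HH (so that equality of
   orientations is equality of maps on HH). *)
Definition orient := {ffun {set 'I_n} -> option 'I_n}.

Definition is_orientation (HH : hypergraph) (O : orient) : Prop :=
  forall H, (H \in HH -> exists v, O H = Some v /\ v \in H) /\
            (H \notin HH -> O H = None).

Definition has_cycle (HH : hypergraph) (O : orient) : Prop :=
  exists (k : nat) (f : nat -> {set 'I_n}),
    (2 <= k)%N /\ (forall t, (t < k)%N -> f t \in HH) /\
    (forall t, (t < k)%N -> exists v,
        O (f ((t.+1) %% k)) = Some v /\ v \in f t /\ O (f t) <> Some v).

Definition acyclic_orientation (HH : hypergraph) (O : orient) : Prop :=
  is_orientation HH O /\ ~ has_cycle HH O.

Definition increasing_flip (HH : hypergraph) (O O' : orient) : Prop :=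
  O <> O' /\
  exists i j : 'I_n, (i < j)%N /\
    forall H, H \in HH ->
      (O H <> O' H -> O H = Some i /\ O' H = Some j) /\
      (i \in H -> j \in H -> (O H = Some i <-> O' H = Some j)).

Definition flip_rel (HH : hypergraph) : relation orient :=
  fun O O' => acyclic_orientation HH O /\ acyclic_orientation HH O' /\
              increasing_flip HH O O'.

Definition hg_le (HH : hypergraph) : relation orient :=
  clos_refl_trans orient (flip_rel HH).

Definition hypergraphic_poset_is_lattice (HH : hypergraph) : Prop :=
  forall x y, acyclic_orientation HH x -> acyclic_orientation HH y ->
    (exists z, [/\ acyclic_orientation HH z, hg_le HH x z, hg_le HH y z &
        forall w, acyclic_orientation HH w -> hg_le HH x w -> hg_le HH y w ->
                  hg_le HH z w]) /\
    (exists z, [/\ acyclic_orientation HH z, hg_le HH z x, hg_le HH z y &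
        forall w, acyclic_orientation HH w -> hg_le HH w x -> hg_le HH w y ->
                  hg_le HH w z]).

End Hyper.

From mathcomp Require Import all_boot zify.
From Stdlib Require Import Relations Classical.
Set Implicit Arguments. Unset Strict Implicit. Unset Printing Implicit Defensive.

(* Encode an orientation by the vertex it chooses in each member.  For an
   interval hypergraph an orientation is acyclic as soon as it has no 2-cycle
   (in a longer cycle the member with the largest chosen vertex can be skipped,
   by convexity), and the poset order is the componentwise order of the chosen
   vertices: below a larger acyclic orientation one can always perform an
   increasing flip i -> j, with i the largest chosen vertex that still has to
   move.  If the hypergraph is closed under intersection, the join of two
   orientations is reached from their componentwise maximum by repeatedly moving
   the choice in H up to the largest choice of a member K included in H and
   containing it; meets are joins of all lower bounds.  Conversely, if
   I = [a, b] and J = [c, d] are members with a < c < b < d but [c, b] is not,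
   there are two orientations with two upper bounds that force any join to
   choose c in I and b in J, which is a 2-cycle. *)

Lemma periodic_mod (T : Type) (g : nat -> T) k :
  (forall t, g (t + k) = g t) -> forall t, g t = g (t %% k).
Proof.
move=> per t; rewrite {1}(divn_eq t k).
elim: (t %/ k) => [|q IH]; first by rewrite mul0n add0n.
by rewrite mulSn -addnA addnC per.
Qed.

Lemma ltn_sum_in (T : finType) (A : {pred T}) (F G : T -> nat) x :
  x \in A -> (forall y, y \in A -> F y <= G y) -> F x < G x ->
  \sum_(y in A) F y < \sum_(y in A) G y.
Proof.
move=> Ax le_FG lt_x; rewrite (bigD1 x) //= [X in _ < X](bigD1 x) //=.
by rewrite -addSn leq_add // leq_sum // => y /andP[/le_FG].
Qed.

Section FiniteJoinSemilattice.
Variables (T : finType) (P : T -> Prop) (le : T -> T -> Prop).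
Hypothesis le_trans : forall x y z, le x y -> le y z -> le x z.
Hypothesis bottom : exists2 b, P b & forall w, P w -> le b w.
Hypothesis join : forall x y, P x -> P y -> exists z,
  [/\ P z, le x z, le y z & forall w, P w -> le x w -> le y w -> le z w].

Lemma supremum_exists (Q : T -> Prop) : exists z,
  [/\ P z, forall w, P w -> Q w -> le w z &
     forall u, P u -> (forall w, P w -> Q w -> le w u) -> le z u].
Proof.
have sup_seq (s : seq T) : exists z,
    [/\ P z, forall w, w \in s -> P w -> Q w -> le w z &
       forall u, P u -> (forall w, w \in s -> P w -> Q w -> le w u) -> le z u].
  elim: s => [|a s [z [Pz ub lub]]].
    by case: bottom => b Pb minb; exists b; split=> // u Pu _; apply: minb.
  have ub_s u : (forall w, w \in a :: s -> P w -> Q w -> le w u) ->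
      forall w, w \in s -> P w -> Q w -> le w u.
    by move=> ubu w ws; apply: ubu; rewrite inE ws orbT.
  have [[Pa Qa]|notPQa] := classic (P a /\ Q a).
    have [z' [Pz' az' zz' lub']] := join Pa Pz.
    exists z'; split=> // [w|u Pu ubu].
      by rewrite inE => /predU1P[-> //|ws Pw Qw]; apply: le_trans (ub w ws Pw Qw) zz'.
    by apply: lub' => //; [apply: ubu; rewrite ?inE ?eqxx | apply: lub => //; apply: ub_s].
  exists z; split=> [//|w|u Pu ubu]; last by apply: lub => //; apply: ub_s.
  by rewrite inE => /predU1P[-> Pa Qa|]; [case: notPQa | apply: ub].
have [z [Pz ub lub]] := sup_seq (enum T).
exists z; split=> // [w Pw Qw|u Pu ubu]; first by apply: ub; rewrite ?mem_enum.
by apply: lub => // w _; apply: ubu.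
Qed.

Lemma meet_exists x y : P x -> P y -> exists z,
  [/\ P z, le z x, le z y & forall w, P w -> le w x -> le w y -> le w z].
Proof.
move=> Px Py; have [z [Pz ub lub]] := supremum_exists (fun w => le w x /\ le w y).
exists z; split=> // [||w Pw wx wy]; try by apply: lub => // w _ [].
exact: ub.
Qed.

End FiniteJoinSemilattice.

Lemma setI_interval_cases n (a b c d : 'I_n) : a <= b -> c <= d -> a <= c ->
  interval a b :&: interval c d != set0 ->
  [\/ interval a b :&: interval c d = interval a b,
      interval a b :&: interval c d = interval c d,
      interval a b :&: interval c d = [set c] |
      [/\ a < c, c < b, b < d & interval a b :&: interval c d = interval c b]].
Proof.
move=> ab cd ac /set0Pn[v]; rewrite !inE => /andP[/andP[av vb] /andP[cv vd]].
case: (leqP d b) => [db|bd]; first by apply: Or42; apply/setP => u; rewrite !inE; lia.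
have [eq_ac|lt_ac] : a = c :> nat \/ a < c by lia.
  by apply: Or41; apply/setP => u; rewrite !inE; lia.
have [eq_cb|lt_cb] : c = b :> nat \/ c < b by lia.
  by apply: Or43; apply/setP => u; rewrite !inE -val_eqE /= eqn_leq; lia.
by apply: Or44; split=> //; apply/setP => u; rewrite !inE; lia.
Qed.

Section IntervalHypergraph.
Variables (n : nat) (HH : {set {set 'I_n}}) (x0 : 'I_n).

Local Notation choice := ({set 'I_n} -> 'I_n).

(** * Acyclic orientations as choice functions *)

Definition selects (m : choice) := forall H, H \in HH -> m H \in H.

Definition no_two_cycle (m : choice) :=
  forall A B, A \in HH -> B \in HH -> m A \in B -> m B \in A -> m A = m B.

Definition acyclic_choice (m : choice) := selects m /\ no_two_cycle m.

Definition choice_le (m m' : choice) := forall H, H \in HH -> m H <= m' H.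

Definition orient_of (m : choice) : orient n :=
  [ffun H => if H \in HH then Some (m H) else None].

Definition choice_of (O : orient n) : choice := fun H => odflt x0 (O H).

Lemma orient_ofE m H : H \in HH -> orient_of m H = Some (m H).
Proof. by move=> hH; rewrite ffunE hH. Qed.

Lemma choice_of_orient m H : H \in HH -> choice_of (orient_of m) H = m H.
Proof. by move=> hH; rewrite /choice_of orient_ofE. Qed.

Lemma orient_of_selects m : selects m -> is_orientation HH (orient_of m).
Proof.
move=> sel H; split=> hH; first by exists (m H); rewrite orient_ofE ?sel.
by rewrite ffunE (negbTE hH).
Qed.

Lemma choice_ofK O : is_orientation HH O -> orient_of (choice_of O) = O.
Proof.
move=> hO; apply/ffunP => H; rewrite ffunE /choice_of; case: (hO H) => in_HH notin_HH.
by case: ifP => [/in_HH [v [-> _]] | /negbT/notin_HH ->].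
Qed.

Lemma choice_ofE O H : is_orientation HH O -> H \in HH -> O H = Some (choice_of O H).
Proof. by move=> hO /(hO H).1 [v [eOH _]]; rewrite /choice_of eOH. Qed.

Lemma choice_of_selects O : is_orientation HH O -> selects (choice_of O).
Proof. by move=> hO H /(hO H).1 [v [eOH vH]]; rewrite /choice_of eOH. Qed.

Lemma acyclic_choice_of O : acyclic_orientation HH O -> acyclic_choice (choice_of O).
Proof.
case=> hO no_cycle; split=> [|A B hA hB AB BA]; first exact: choice_of_selects.
apply/eqP/negP => neAB; apply: no_cycle.
have [eA eB] := (choice_ofE hO hA, choice_ofE hO hB).
exists 2, (fun t => if t == 0 then A else B); do 2!split=> //; first by case=> [|[|]].
case=> [|[|]] // _ /=; [exists (choice_of O B) | exists (choice_of O A)];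
  by rewrite ?eA ?eB; do 2!split=> //; case=> eAB; rewrite eAB eqxx in neAB.
Qed.

Lemma hg_le_choice_le O O' : hg_le HH O O' -> choice_le (choice_of O) (choice_of O').
Proof.
elim=> {O O'} [O O' [_ [_ [_ [i [j [lt_ij flip]]]]]] | O | O1 O2 O3 _ le12 _ le23] H hH //.
  have [changed _] := flip H hH; rewrite /choice_of.
  by case: (O H =P O' H) => [-> // | /changed [-> ->]]; apply: ltnW.
exact: leq_trans (le12 H hH) (le23 H hH).
Qed.

Definition hereditary (m : choice) :=
  forall H K, H \in HH -> K \in HH -> K \subset H -> m H \in K -> m K = m H.

Lemma acyclic_choice_hereditary m : acyclic_choice m -> hereditary m.
Proof.
by move=> [sel ntc] H K hH hK sKH mHK; apply/esym/ntc => //; apply: (subsetP sKH); apply: sel.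
Qed.

Lemma hereditary_no_two_cycle m : closed_under_intersection HH ->
  selects m -> hereditary m -> no_two_cycle m.
Proof.
move=> closed sel hered A B hA hB mAB mBA.
have AB_HH : A :&: B \in HH by apply: closed => //; apply/set0Pn; exists (m A); rewrite inE sel.
rewrite -(hered A (A :&: B)) ?subsetIl ?inE ?sel //.
by rewrite -(hered B (A :&: B)) ?subsetIr ?inE ?mBA ?sel.
Qed.

Hypothesis HHint : interval_hypergraph HH.

Lemma member_convex H (u v w : 'I_n) :
  H \in HH -> u \in H -> w \in H -> u <= v -> v <= w -> v \in H.
Proof. by case/HHint=> i [j [_ ->]]; rewrite !inE => /andP[iu _] /andP[_ wj] uv vw; lia. Qed.

Definition lo (H : {set 'I_n}) := odflt x0 [pick v in H | [forall u in H, v <= u]].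
Definition hi (H : {set 'I_n}) := odflt x0 [pick v in H | [forall u in H, u <= v]].

Lemma lo_interval (i j : 'I_n) : i <= j -> lo (interval i j) = i.
Proof.
move=> ij; rewrite /lo; case: pickP => [v /andP[] | none] /=.
  rewrite inE => /andP[iv _] /forall_inP/(_ i); rewrite inE leqnn ij => /(_ isT) vi.
  by apply: val_inj; apply/eqP; rewrite eqn_leq vi.
have := none i; rewrite inE leqnn ij /= => /negbT/negP[].
by apply/forall_inP => u; rewrite inE => /andP[].
Qed.

Lemma hi_interval (i j : 'I_n) : i <= j -> hi (interval i j) = j.
Proof.
move=> ij; rewrite /hi; case: pickP => [v /andP[] | none] /=.
  rewrite inE => /andP[_ vj] /forall_inP/(_ j); rewrite inE leqnn ij => /(_ isT) jv.
  by apply: val_inj; apply/eqP; rewrite eqn_leq vj.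
have := none j; rewrite inE leqnn ij /= => /negbT/negP[].
by apply/forall_inP => u; rewrite inE => /andP[].
Qed.

Lemma lo_acyclic : acyclic_choice lo.
Proof.
split=> [H /HHint[i [j [ij ->]]] | A B /HHint[i1 [j1 [ij1 ->]]] /HHint[i2 [j2 [ij2 ->]]]].
  by rewrite lo_interval // inE leqnn ij.
by rewrite !lo_interval // !inE => ? ?; apply/val_inj => /=; lia.
Qed.

Lemma lo_least m : selects m -> choice_le lo m.
Proof.
move=> sel H hH; move: (sel H hH); case/HHint: hH => i [j [ij ->]].
by rewrite lo_interval // inE => /andP[].
Qed.

Definition cycle_step (m : choice) (A B : {set 'I_n}) := m B \in A /\ m A <> m B.

Lemma cycle_step_skip m P M S : acyclic_choice m ->
  P \in HH -> M \in HH -> S \in HH -> m P <= m M -> m S <= m M ->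
  cycle_step m P M -> cycle_step m M S -> cycle_step m P S.
Proof.
move=> [sel ntc] hP hM hS PM SM [MP nPM] [SM' nMS].
have ltPM : m P < m M by rewrite ltn_neqAle PM andbT val_eqE; apply/eqP.
have ltSM : m S < m M by rewrite ltn_neqAle SM andbT val_eqE eq_sym; apply/eqP.
have PnotM : m P \notin M by apply/negP => PM'; exact: nPM (ntc P M hP hM PM' MP).
have ltPS : m P < m S.
  rewrite ltnNge; apply: contra PnotM => SP.
  exact: member_convex hM SM' (sel M hM) SP (ltnW ltPM).
split; first exact: member_convex hP (sel P hP) MP (ltnW ltPS) (ltnW ltSM).
by move=> ePS; rewrite ePS ltnn in ltPS.
Qed.

Lemma no_periodic_cycle m k (g : nat -> {set 'I_n}) : acyclic_choice m ->
  (forall t, g (t + k.+1) = g t) -> (forall t, g t \in HH) ->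
  ~ (forall t, cycle_step m (g t) (g t.+1)).
Proof.
move=> mA; elim: k g => [|k IH] g per g_HH step.
  by case: (step 0) => _; rewrite -[1]/(0 + 1) per.
have [t0 t0_max] : exists t0, forall t, m (g t) <= m (g t0).
  have [t0 _ max] := @arg_maxnP _ (ord0 : 'I_k.+2) xpredT (fun t => m (g t)) isT.
  exists t0 => t; have t_lt : t %% k.+2 < k.+2 by rewrite ltn_mod.
  by rewrite (periodic_mod per t); apply: (max (Ordinal t_lt)).
apply: (IH (fun t => g (t %% k.+1 + t0.+1))) => [t|t|t]; first by rewrite modnDr.
  exact: g_HH.
have := ltn_mod t k.+1; rewrite ltnS leq_eqVlt => /predU1P[t_last|t_lt].
  have -> : t.+1 %% k.+1 = 0 by rewrite -addn1 -modnDml t_last addn1 modnn.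
  rewrite t_last add0n -addSnnS addnC.
  have step_last := step (t0 + k.+1); rewrite -addnS per in step_last.
  by apply: cycle_step_skip step_last (step t0) => //; apply: t0_max.
have -> : t.+1 %% k.+1 = (t %% k.+1).+1 by rewrite -addn1 -modnDml addn1 modn_small.
exact: step.
Qed.

Lemma acyclic_choice_orientation m : acyclic_choice m -> acyclic_orientation HH (orient_of m).
Proof.
move=> mA; split; first exact: orient_of_selects mA.1.
case=> [[|k]] [f [//= _ [f_HH step]]].
apply: (@no_periodic_cycle m k (fun t => f (t %% k.+1))) => // [t|t|t].
- by rewrite modnDr.
- by apply: f_HH; rewrite ltn_mod.
have [|v [eOv [vf neOv]]] := step (t %% k.+1); first by rewrite ltn_mod.
rewrite -addn1 modnDml addn1 !orient_ofE ?f_HH ?ltn_mod // in eOv neOv.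
by case: eOv neOv vf => <- neOv vf; split=> // emm; apply: neOv; rewrite emm.
Qed.

(** * Increasing flips realise the componentwise order *)

Definition flip_choice (i j : 'I_n) (m : choice) : choice :=
  fun H => if [&& i \in H, j \in H & m H == i] then j else m H.

Lemma flip_choice_ge (i j : 'I_n) m : i <= j -> choice_le m (flip_choice i j m).
Proof. by move=> le_ij H _; rewrite /flip_choice; case: and3P => // [[_ _ /eqP ->]]. Qed.

Section Flip.
Variables (m m' : choice) (i j : 'I_n) (H0 : {set 'I_n}).
Hypotheses (mA : acyclic_choice m) (m'A : acyclic_choice m') (le_mm' : choice_le m m').
Hypotheses (H0_HH : H0 \in HH) (mH0 : m H0 = i) (m'H0 : m' H0 = j) (lt_ij : i < j).
Hypothesis max_i : forall H, H \in HH -> m H < m' H -> m H <= i.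
Hypothesis max_j : forall H, H \in HH -> m H < m' H -> m H = i -> m' H <= j.

Let i_H0 : i \in H0. Proof. by rewrite -mH0 mA.1. Qed.
Let j_H0 : j \in H0. Proof. by rewrite -m'H0 m'A.1. Qed.

Lemma flip_source_not_target H : H \in HH -> i \in H -> j \in H -> m H != j.
Proof.
move=> hH iH jH; apply/eqP => mHj.
by have := mA.2 H H0 hH H0_HH; rewrite mHj mH0 => /(_ j_H0 iH) eji; move: lt_ij; rewrite eji ltnn.
Qed.

(* Otherwise H and H0 would form a 2-cycle of m'. *)
Lemma flip_target H : H \in HH -> i \in H -> j \in H -> m H = i -> m' H = j.
Proof.
move=> hH iH jH mHi; case: (ltnP (m H) (m' H)) => [lt_H | ge_H]; last first.
  have m'Hi : m' H = i by apply: val_inj; apply/eqP; rewrite -mHi eqn_leq ge_H le_mm'.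
  have := m'A.2 H H0 hH H0_HH; rewrite m'Hi m'H0 => /(_ i_H0 jH) eij.
  by move: lt_ij; rewrite eij ltnn.
have le_j := max_j hH lt_H mHi.
case: (ltnP (m' H) j) => [lt_j | ge_j]; last by apply: val_inj; apply/eqP; rewrite eqn_leq le_j.
have ge_i : i <= m' H by rewrite -mHi ltnW.
have m'H_H0 : m' H \in H0 := member_convex H0_HH i_H0 j_H0 ge_i (ltnW lt_j).
have := m'A.2 H H0 hH H0_HH m'H_H0; rewrite m'H0 => /(_ jH) e.
by rewrite e ltnn in lt_j.
Qed.

Lemma flip_choice_le : choice_le (flip_choice i j m) m'.
Proof.
move=> H hH; rewrite /flip_choice; case: and3P => [[iH jH /eqP mHi]|_]; last exact: le_mm'.
by rewrite (flip_target hH iH jH mHi).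
Qed.

Lemma flip_choice_selects : selects (flip_choice i j m).
Proof. by move=> H hH; rewrite /flip_choice; case: and3P => [[] //|_]; apply: mA.1. Qed.

Lemma flipped_unflipped A B : A \in HH -> B \in HH -> i \in A -> j \in A -> m A = i ->
  ~~ [&& i \in B, j \in B & m B == i] -> j \in B -> m B \in A -> m B = j.
Proof.
move=> hA hB iA jA mAi unflippedB jB mBA; apply/eqP/negP => neBj.
have iB : i \notin B.
  apply: contra unflippedB => iB; rewrite iB jB /=.
  by have := mA.2 A B hA hB; rewrite mAi => /(_ iB mBA) ->.
have lt_iB : i < m B.
  rewrite ltnNge; apply: contra iB => le_Bi.
  exact: member_convex hB (mA.1 B hB) jB le_Bi (ltnW lt_ij).
have m'B : m' B = m B.
  case: (ltnP (m B) (m' B)) => [lt_B | ge_B]; first by have := max_i hB lt_B; rewrite leqNgt lt_iB.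
  by apply: val_inj; apply/eqP; rewrite eqn_leq ge_B le_mm'.
have := m'A.2 A B hA hB; rewrite (flip_target hA iA jA mAi) m'B => /(_ jB mBA) e.
by rewrite e eqxx in neBj.
Qed.

Lemma flip_choice_no_two_cycle : no_two_cycle (flip_choice i j m).
Proof.
move=> A B hA hB; rewrite /flip_choice.
case: ifP => [/and3P[iA jA /eqP mAi]|/negbT unflippedA];
  case: ifP => [/and3P[iB jB /eqP mBi]|/negbT unflippedB] //.
- by move=> jB mBA; apply/esym/(flipped_unflipped hA hB).
- by move=> mAB jA; apply: (flipped_unflipped hB hA).
- exact: mA.2.
Qed.

Lemma flip_choice_acyclic : acyclic_choice (flip_choice i j m).
Proof. by split; [apply: flip_choice_selects | apply: flip_choice_no_two_cycle]. Qed.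

Lemma flip_choice_increasing : increasing_flip HH (orient_of m) (orient_of (flip_choice i j m)).
Proof.
split.
  move/ffunP/(_ H0); rewrite !orient_ofE // /flip_choice i_H0 j_H0 mH0 eqxx /= => -[eij].
  by move: lt_ij; rewrite eij ltnn.
exists i, j; split=> // H hH; rewrite !orient_ofE // /flip_choice.
case: and3P => [[_ _ /eqP ->] | unflipped]; first by split.
split=> [[] //|iH jH]; split=> -[e].
  by case: unflipped; rewrite iH jH e.
by have := flip_source_not_target hH iH jH; rewrite e eqxx.
Qed.

End Flip.

(* The flip moves i, the largest value of m on members where m < m', to
   j = m' H0, where H0 maximises m' among those members with value i. *)
Lemma flip_step m m' H : acyclic_choice m -> acyclic_choice m' -> choice_le m m' ->
  H \in HH -> m H != m' H ->
  exists m2, [/\ acyclic_choice m2, flip_rel HH (orient_of m) (orient_of m2),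
    choice_le m2 m' & \sum_(K in HH) (m' K - m2 K) < \sum_(K in HH) (m' K - m K)].
Proof.
move=> mA m'A le_mm' hH neH.
pose below := [pred K | (K \in HH) && (m K < m' K)].
have below_H : below H by rewrite /= hH ltn_neqAle val_eqE neH le_mm'.
have [H1 below_H1 max_i] := @arg_maxnP _ H below (fun K => m K) below_H.
have top_H1 : [pred K | below K && (m K == m H1)] H1 by rewrite /= eqxx andbT.
have [H0 /andP[/andP[H0_HH lt_H0] /eqP mH0] max_j] := arg_maxnP (fun K => m' K) top_H1.
have flip_i K : K \in HH -> m K < m' K -> m K <= m H1 by move=> hK lt; apply: max_i; rewrite /= hK.
have flip_j K : K \in HH -> m K < m' K -> m K = m H1 -> m' K <= m' H0.
  by move=> hK lt eK; apply: max_j; rewrite /= hK lt eK eqxx.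
rewrite mH0 in lt_H0.
have m2A := flip_choice_acyclic mA m'A le_mm' H0_HH mH0 erefl lt_H0 flip_i flip_j.
exists (flip_choice (m H1) (m' H0) m); split=> //.
- split; [exact: acyclic_choice_orientation | split; first exact: acyclic_choice_orientation].
  exact: flip_choice_increasing mA m'A H0_HH mH0 erefl lt_H0.
- exact: flip_choice_le mA m'A le_mm' H0_HH mH0 erefl lt_H0 flip_j.
apply: (ltn_sum_in H0_HH) => [K hK|].
  by rewrite leq_sub2l // (flip_choice_ge m (ltnW lt_H0) hK).
by rewrite /flip_choice -mH0 (mA.1 _ H0_HH) (m'A.1 _ H0_HH) eqxx subnn subn_gt0 mH0.
Qed.

Lemma choice_le_hg_le m m' : acyclic_choice m -> acyclic_choice m' -> choice_le m m' ->
  hg_le HH (orient_of m) (orient_of m').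
Proof.
move=> + m'A; have [N] := ubnP (\sum_(H in HH) (m' H - m H)).
elim: N m => // N IH m ltN mA le_mm'.
have [/forall_inP eq_mm' | /forall_inPn [H hH neH]] :=
  boolP [forall (H | H \in HH), m H == m' H].
  suff -> : orient_of m = orient_of m' by apply: rt_refl.
  by apply/ffunP => H; rewrite !ffunE; case: ifP => // /eq_mm' /eqP ->.
have [m2 [m2A flip le_m2m' lt_sum]] := flip_step mA m'A le_mm' hH neH.
exact: rt_trans (rt_step _ _ _ _ flip) (IH m2 (leq_trans lt_sum ltN) m2A le_m2m').
Qed.

Lemma hg_le_orient_of m m' : acyclic_choice m -> acyclic_choice m' ->
  hg_le HH (orient_of m) (orient_of m') <-> choice_le m m'.
Proof.
move=> mA m'A; split; last exact: choice_le_hg_le.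
move/hg_le_choice_le => le_mm' H hH.
by rewrite -(choice_of_orient m hH) -(choice_of_orient m' hH) le_mm'.
Qed.

Lemma acyclic_orientationP O :
  acyclic_orientation HH O <-> exists2 m, acyclic_choice m & O = orient_of m.
Proof.
split=> [aO | [m mA ->]]; last exact: acyclic_choice_orientation.
by exists (choice_of O); [apply: acyclic_choice_of | rewrite choice_ofK //; case: aO].
Qed.

(** * Joins in intersection-closed hypergraphs *)

Definition subset_monotone (m : choice) :=
  forall H K, H \in HH -> K \in HH -> K \subset H -> m H \in K -> m H <= m K.

Definition highest_sub (m : choice) H :=
  [arg max_(K > H | [&& K \in HH, K \subset H & m H \in K]) m K].

Definition raise (m : choice) : choice := fun H => m (highest_sub m H).

Lemma highest_subP m H : selects m -> H \in HH ->
  [/\ highest_sub m H \in HH, highest_sub m H \subset H, m H \in highest_sub m H &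
   forall K, K \in HH -> K \subset H -> m H \in K -> m K <= raise m H].
Proof.
move=> sel hH; rewrite /raise /highest_sub.
case: arg_maxnP => [|K /and3P[hK sKH mHK] max]; first by rewrite hH subxx sel.
by split=> // K' hK' sK'H mHK'; apply: max; rewrite hK' sK'H mHK'.
Qed.

Lemma raise_ge m : selects m -> choice_le m (raise m).
Proof. by move=> sel H hH; have [_ _ _ -> //] := highest_subP sel hH; rewrite sel. Qed.

Lemma raise_selects m : selects m -> selects (raise m).
Proof.
by move=> sel H hH; have [hK sKH _ _] := highest_subP sel hH; apply: (subsetP sKH); apply: sel.
Qed.

Lemma raise_fixed_hereditary m : selects m -> subset_monotone m ->
  (forall H, H \in HH -> raise m H = m H) -> hereditary m.
Proof.
move=> sel mono fixed H K hH hK sKH mHK; have [_ _ _ max] := highest_subP sel hH.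
by apply/eqP; rewrite -val_eqE /= eqn_leq (mono H K) // andbT -(fixed H hH) max.
Qed.

Lemma raise_le m mw : selects m -> acyclic_choice mw -> choice_le m mw ->
  choice_le (raise m) mw.
Proof.
move=> sel mwA le_mmw H hH; have [hK sKH mHK _] := highest_subP sel hH.
rewrite /raise; set K := highest_sub m H in hK sKH mHK *.
have [mwHK | mwH_notK] := boolP (mw H \in K).
  by rewrite -(acyclic_choice_hereditary mwA hH hK sKH mwHK) le_mmw.
rewrite leqNgt; apply: contra mwH_notK => lt_mw.
exact: member_convex hK mHK (sel K hK) (le_mmw H hH) (ltnW lt_mw).
Qed.

Section IntersectionClosed.
Hypothesis HHcap : closed_under_intersection HH.

Lemma raise_subset_monotone m : selects m -> subset_monotone m -> subset_monotone (raise m).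
Proof.
move=> sel mono H K hH hK sKH.
have [hK0 sK0H mHK0 _] := highest_subP sel hH.
have [_ _ _ maxK] := highest_subP sel hK.
rewrite {1 2}/raise; set K0 := highest_sub m H in hK0 sK0H mHK0 * => mK0K.
have le_K := raise_ge sel hK.
have mK0K0 := sel K0 hK0.
have [mKK0 | mK_notK0] := boolP (m K \in K0).
  have hL : K :&: K0 \in HH.
    by apply: HHcap => //; apply/set0Pn; exists (m K0); rewrite inE mK0K.
  apply: leq_trans (mono _ _ hK0 hL (subsetIr _ _) _) (maxK _ hL (subsetIl _ _) _).
    by rewrite inE mK0K.
  by rewrite inE mKK0 sel.
case: (ltnP (m K0) (m K)) => [lt_K0K | le_KK0]; first exact: leq_trans (ltnW lt_K0K) le_K.
have le_HK0 := mono _ _ hH hK0 sK0H mHK0.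
have lt_KH : m K < m H.
  rewrite ltnNge; apply: contra mK_notK0 => le_HK.
  exact: member_convex hK0 mHK0 mK0K0 le_HK le_KK0.
have mHK : m H \in K by apply: member_convex hK (sel K hK) mK0K (ltnW lt_KH) le_HK0.
by have := mono _ _ hH hK sKH mHK; rewrite leqNgt lt_KH.
Qed.

(* m' is the fixed point of raise above m. *)
Lemma hereditary_closure m : selects m -> subset_monotone m ->
  exists m', [/\ acyclic_choice m', choice_le m m' &
    forall mw, acyclic_choice mw -> choice_le m mw -> choice_le m' mw].
Proof.
have [N] := ubnP (\sum_(H in HH) (n - m H)).
elim: N m => // N IH m ltN sel mono.
have [/forall_inP fixed | /forall_inPn [H hH neH]] :=
  boolP [forall (H | H \in HH), raise m H == m H].
  exists m; split=> //; split=> //.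
  by apply: hereditary_no_two_cycle => //; apply: raise_fixed_hereditary => // H /fixed /eqP.
have lt_sum : \sum_(H in HH) (n - raise m H) < \sum_(H in HH) (n - m H).
  apply: (ltn_sum_in hH) => [K hK|]; first by rewrite leq_sub2l ?raise_ge.
  have lt_raise : m H < raise m H by rewrite ltn_neqAle eq_sym val_eqE neH raise_ge.
  exact: ltn_sub2l (ltn_ord _) lt_raise.
have [m' [m'A le_raise least]] :=
  IH _ (leq_trans lt_sum ltN) (raise_selects sel) (raise_subset_monotone sel mono).
exists m'; split=> // [K hK | mw mwA le_mmw]; last by apply: least => //; apply: raise_le.
exact: leq_trans (raise_ge sel hK) (le_raise K hK).
Qed.

Lemma choice_join mx my : acyclic_choice mx -> acyclic_choice my ->
  exists mz, [/\ acyclic_choice mz, choice_le mx mz, choice_le my mz &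
    forall mw, acyclic_choice mw -> choice_le mx mw -> choice_le my mw -> choice_le mz mw].
Proof.
move=> mxA myA; pose m0 H := if mx H <= my H then my H else mx H.
have le_x0 : choice_le mx m0 by move=> H _; rewrite /m0; case: (leqP (mx H) (my H)).
have le_y0 : choice_le my m0 by move=> H _; rewrite /m0; case: (leqP (mx H) (my H)) => // /ltnW.
have sel0 : selects m0 by move=> H hH; rewrite /m0; case: ifP => _; [apply: myA.1 | apply: mxA.1].
have mono0 : subset_monotone m0.
  move=> H K hH hK sKH; rewrite {1 2}/m0; case: ifP => _ m0HK.
    by rewrite -(acyclic_choice_hereditary myA hH hK sKH m0HK) le_y0.
  by rewrite -(acyclic_choice_hereditary mxA hH hK sKH m0HK) le_x0.
have [mz [mzA le_0z least]] := hereditary_closure sel0 mono0.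
exists mz; split=> // [H hH|H hH|mw mwA le_xw le_yw].
- exact: leq_trans (le_x0 H hH) (le_0z H hH).
- exact: leq_trans (le_y0 H hH) (le_0z H hH).
by apply: least => // H hH; rewrite /m0; case: ifP => _; [apply: le_yw | apply: le_xw].
Qed.

Lemma hg_join x y : acyclic_orientation HH x -> acyclic_orientation HH y ->
  exists z, [/\ acyclic_orientation HH z, hg_le HH x z, hg_le HH y z &
    forall w, acyclic_orientation HH w -> hg_le HH x w -> hg_le HH y w -> hg_le HH z w].
Proof.
move=> /acyclic_orientationP[mx mxA ->] /acyclic_orientationP[my myA ->].
have [mz [mzA le_xz le_yz least]] := choice_join mxA myA.
exists (orient_of mz); split; first exact: acyclic_choice_orientation.
- exact/hg_le_orient_of.
- exact/hg_le_orient_of.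
by move=> _ /acyclic_orientationP[mw mwA ->]; rewrite !hg_le_orient_of //; apply: least.
Qed.

Lemma closed_lattice : hypergraphic_poset_is_lattice HH.
Proof.
move=> x y xA yA; split; first exact: hg_join.
apply: (meet_exists (@rt_trans _ _) _ hg_join) => //.
exists (orient_of lo); first exact: acyclic_choice_orientation lo_acyclic.
move=> _ /acyclic_orientationP[mw mwA ->].
by apply/hg_le_orient_of => //; [apply: lo_acyclic | apply: lo_least mwA.1].
Qed.

End IntersectionClosed.

(** * Two crossing members without their intersection *)

Section Crossing.
Variables a b c d : 'I_n.
Hypotheses (I_HH : interval a b \in HH) (J_HH : interval c d \in HH).
Hypotheses (lt_ac : a < c) (lt_cb : c < b) (lt_bd : b < d).
Hypothesis cb_notin : interval c b \notin HH.

Let x : choice := fun H => if c \in H then c else lo H.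
Let y : choice := fun H => if lo H < c then lo H else if b \in H then b else lo H.
Let z1 : choice := fun H => if b \in H then b else hi H.
Let z2 : choice := fun H => if b < hi H then hi H else if c \in H then c else hi H.

Ltac case_lia := repeat case: ifP => ?; move=> *; try apply/val_inj => /=; lia.

Lemma crossing_acyclic :
  [/\ acyclic_choice x, acyclic_choice y, acyclic_choice z1 & acyclic_choice z2].
Proof.
by split; split=> [H | A B]; do ?move=> /HHint[? [? [? ->]]];
  rewrite /x /y /z1 /z2 ?lo_interval ?hi_interval // !inE; case_lia.
Qed.

(* The only member on which y would exceed z2 is [c, b]. *)
Lemma crossing_upper_bounds :
  [/\ choice_le x z1, choice_le x z2, choice_le y z1 & choice_le y z2].
Proof.
split=> H /[dup] hH /HHint[i [j [ij eH]]];
  rewrite eH /x /y /z1 /z2 ?lo_interval ?hi_interval // !inE; [case_lia.. |].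
have : ~ (i = c :> nat /\ j = b :> nat).
  by case=> /val_inj ic /val_inj jb; move: cb_notin; rewrite -ic -jb -eH hH.
case_lia.
Qed.

Lemma crossing_not_lattice : ~ hypergraphic_poset_is_lattice HH.
Proof.
have [xA yA z1A z2A] := crossing_acyclic.
have [le_x1 le_x2 le_y1 le_y2] := crossing_upper_bounds.
move=> lattice.
have [[_ [/acyclic_orientationP[mz mzA ->] le_xz le_yz least]] _] :=
  lattice _ _ (acyclic_choice_orientation xA) (acyclic_choice_orientation yA).
move: le_xz le_yz => /(hg_le_orient_of xA mzA) le_xz /(hg_le_orient_of yA mzA) le_yz.
have le_mz zi : acyclic_choice zi -> choice_le x zi -> choice_le y zi -> choice_le mz zi.
  move=> ziA le_x le_y; apply/(hg_le_orient_of mzA ziA); apply: least.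
  - exact: acyclic_choice_orientation.
  - exact/hg_le_orient_of.
  - exact/hg_le_orient_of.
have le_z1 := le_mz _ z1A le_x1 le_y1; have le_z2 := le_mz _ z2A le_x2 le_y2.
have mzI : mz (interval a b) = c :> nat.
  have := le_xz _ I_HH; have := le_z2 _ I_HH.
  by rewrite /x /z2 hi_interval ?inE; [case_lia | lia].
have mzJ : mz (interval c d) = b :> nat.
  have := le_yz _ J_HH; have := le_z1 _ J_HH.
  by rewrite /y /z1 lo_interval ?inE; [case_lia | lia].
have := mzA.2 _ _ I_HH J_HH; rewrite !inE mzI mzJ => /(_ _ _)/(congr1 val) /=.
lia.
Qed.

End Crossing.

Lemma lattice_closed : contains_singletons HH ->
  hypergraphic_poset_is_lattice HH -> closed_under_intersection HH.
Proof.
move=> singletons lattice.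
suff closed_ordered (a b c d : 'I_n) : a <= b -> c <= d -> a <= c ->
    interval a b \in HH -> interval c d \in HH -> interval a b :&: interval c d != set0 ->
    interval a b :&: interval c d \in HH.
  move=> I J /[dup] I_HH /HHint[a [b [ab eI]]] /[dup] J_HH /HHint[c [d [cd eJ]]].
  rewrite eI eJ in I_HH J_HH *.
  by case: (leqP a c) => [ac | /ltnW ca]; last rewrite setIC; apply: closed_ordered.
move=> ab cd ac I_HH J_HH.
case/(setI_interval_cases ab cd ac) => [-> | -> | -> | [lt_ac lt_cb lt_bd ->]] //.
apply: contraT => cb_notin.
by case: (crossing_not_lattice I_HH J_HH lt_ac lt_cb lt_bd cb_notin).
Qed.

End IntervalHypergraph.

Theorem theoremA (n : nat) (HH : {set {set 'I_n}}) :
  (0 < n)%N ->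
  interval_hypergraph HH ->
  contains_singletons HH ->
  (hypergraphic_poset_is_lattice HH <-> closed_under_intersection HH).
Proof.
move=> n_gt0 HHint singletons; pose x0 := Ordinal n_gt0.
split; [exact: lattice_closed x0 HHint singletons | exact: closed_lattice x0 HHint].
Qed.
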